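(* Let $Z_1,Z_2,\ldots$ be i.i.d. from a distribution $\mathcal{D}$ on $\mathbb{Z}$, let $\ell:\Theta\times\mathbb{Z}\to[0,\infty)$ be a loss with risk $R(\theta)=\mathbb{E}_{Z\sim\mathcal{D}}\ell(\theta;Z)$ and risk minimizer $\theta^*=\arg\min_\theta R(\theta)$. Suppose the strong central condition holds with learning rate $\bar\omega$, and take $\omega\in[0,\bar\omega)$. Let $G_n$ denote either the online GUe-value $G_{n,\mathrm{on}}$ or the offline GUe-value $G_{n,\mathrm{off}}$ with learning rate $\omega$. Fix $\alpha\in(0,1)$. For $\Theta_0\subseteq\Theta$ let $G_n(\Theta_0)=\inf_{\theta\in\Theta_0}G_n(\theta)$, and consider the test that rejects $H_0:\theta^*\in\Theta_0$ in favor of $H_1:\theta^*\notin\Theta_0$ iff $G_n(\Theta_0)\ge\alpha^{-1}$. Then $$\Pr\{G_n(\Theta_0)\ge\alpha^{-1}\}\le\alpha\quad\text{for all }\Theta_0\text{ containing }\theta^*,$$ and the set $C_\alpha(Z^n)=\{\theta\in\Theta: G_n(\theta)<\alpha^{-1}\}$ satisfies $\Pr\{C_\alpha(Z^n)\ni\theta^*\}\ge1-\alpha$. Furthermore, for the online GUe-value, for any stopping time $\tau$, $$\Pr\{G_\tau(\Theta_0)\ge\alpha^{-1}\}\le\alpha\quad\text{and}\quad\Pr\{C_\alpha(Z^\tau)\ni\theta^*\}\ge1-\alpha.$$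
   Context: Empirical risk over a sub-sample $T$ of size $m$: $\widehat R_T(\theta)=m^{-1}\sum_{Z\in T}\ell(\theta;Z)$, and $\widehat R_n=\widehat R_{Z^n}$. An $(\varepsilon,\delta)$-AERM on $T$ ($\varepsilon,\delta\ge0$ fixed) is an estimator $\widehat\theta_T$ with $\widehat R_T(\widehat\theta_T)\le\inf_\theta\widehat R_T(\theta)+\delta/m^{1+\varepsilon}$; an AERM is one for some such constants. Online GUe-value: $G_{n,\mathrm{on}}(\theta)=\exp[-\omega\sum_{i=1}^n\{\ell(\widehat\theta_{i-1};Z_i)-\ell(\theta;Z_i)\}]$, where $\widehat\theta_k$ ($k\ge1$) is any AERM on $Z^k=(Z_1,\ldots,Z_k)$ and $\widehat\theta_0$ is a fixed constant. Offline GUe-value: partition the sample $S=Z^n$ as $S_1\sqcup S_2$ with sizes $n_1,n_2$, let $\widehat\theta_{S_1}$ be any AERM on $S_1$, and set $G_{n,\mathrm{off}}(\theta)=\exp[-\omega n_2\{\widehat R_{S_2}(\widehat\theta_{S_1})-\widehat R_{S_2}(\theta)\}]$. Strong central condition with learning rate $\bar\omega>0$: $\mathbb{E}_{Z\sim\mathcal{D}}\exp[-\omega\{\ell(\theta;Z)-\ell(\theta^*;Z)\}]\le1$ for all $\theta\in\Theta$ and all $\omega\in[0,\bar\omega)$. *)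

From HB Require Import structures.
From mathcomp Require Import all_boot all_order all_algebra.
From mathcomp Require Import all_classical all_reals all_analysis.
Set Implicit Arguments. Unset Strict Implicit. Unset Printing Implicit Defensive.
Import Order.TTheory GRing.Theory Num.Theory.
Local Open Scope classical_set_scope.
Local Open Scope ring_scope.

Section GUe.
Context {R : realType} {Th Zsp Om : Type}.

(* sample Z^k = (Z_1, ..., Z_k); Z_i is represented by [Z (i-1)] *)
Definition sample (Z : nat -> Om -> Zsp) (k : nat) (w : Om) : seq Zsp :=
  [seq Z j w | j <- iota 0 k].

Definition emp_risk (l : Th -> Zsp -> R) (T : seq Zsp) (th : Th) : R :=
  (size T)%:R^-1 * \sum_(z <- T) l th z.

Definition is_AERM_with (l : Th -> Zsp -> R) (est : seq Zsp -> Th) (eps delta : R) :=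
  forall T : seq Zsp, (0 < size T)%N ->
    emp_risk l T (est T) <=
      inf [set emp_risk l T th | th in [set: Th]] + delta / ((size T)%:R `^ (1 + eps)).

Definition is_AERM (l : Th -> Zsp -> R) (est : seq Zsp -> Th) :=
  exists eps delta : R, 0 <= eps /\ 0 <= delta /\ is_AERM_with l est eps delta.

Definition est_on (est : seq Zsp -> Th) (theta0 : Th) (Z : nat -> Om -> Zsp)
  (k : nat) (w : Om) : Th :=
  if k == 0%N then theta0 else est (sample Z k w).

Definition G_on (l : Th -> Zsp -> R) (est : seq Zsp -> Th) (theta0 : Th) (om : R)
  (Z : nat -> Om -> Zsp) (n : nat) (th : Th) (w : Om) : R :=
  expR (- om * \sum_(i < n)
          (l (est_on est theta0 Z i w) (Z i w) - l th (Z i w))).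

Definition subsample (Z : nat -> Om -> Zsp) (n : nat) (I : {set 'I_n}) (w : Om) : seq Zsp :=
  [seq Z (nat_of_ord i) w | i <- enum I].

Definition G_off (l : Th -> Zsp -> R) (est : seq Zsp -> Th) (om : R)
  (Z : nat -> Om -> Zsp) (n : nat) (I1 : {set 'I_n}) (th : Th) (w : Om) : R :=
  let S1 := subsample Z I1 w in
  let S2 := subsample Z (~: I1) w in
  expR (- om * (#|~: I1|)%:R *
          (emp_risk l S2 (est S1) - emp_risk l S2 th)).

Definition G_set (G : Th -> R) (Th0 : set Th) : R := inf [set G th | th in Th0].

End GUe.

Section Prob.
Context {R : realType} {dO dZ : measure_display}
  {Om : measurableType dO} {Zsp : measurableType dZ}.

Definition gen_sigma (Z : nat -> Om -> Zsp) (J : set nat) : set (set Om) :=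
  <<s [set A | exists j (B : set Zsp), J j /\ measurable B /\ A = Z j @^-1` B] >>.

Definition mutually_independent (P : probability Om R) (Z : nat -> Om -> Zsp) :=
  forall (J : seq nat) (B : nat -> set Zsp), uniq J ->
    (forall j, j \in J -> measurable (B j)) ->
    P (\bigcap_(j in [set j | j \in J]) (Z j @^-1` B j)) =
    (\prod_(j <- J) P (Z j @^-1` B j))%E.

Definition iid (P : probability Om R) (Z : nat -> Om -> Zsp) (D : probability Zsp R) :=
  (forall i, measurable_fun setT (Z i)) /\
  mutually_independent P Z /\
  (forall i (B : set Zsp), measurable B -> P (Z i @^-1` B) = D B).

Definition stopping_time (Z : nat -> Om -> Zsp) (tau : Om -> nat) :=
  forall k : nat, gen_sigma Z [set j | (j < k)%N] (tau @^-1` [set k]).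

Definition outer_prob_le (P : probability Om R) (E : set Om) (a : R) :=
  exists A : set Om, measurable A /\ E `<=` A /\ (P A <= a%:E)%E.

End Prob.

From HB Require Import structures.
From mathcomp Require Import all_boot all_order all_algebra.
From mathcomp Require Import all_classical all_reals all_analysis.
From mathcomp Require Import measurable_realfun.
Import Order.TTheory GRing.Theory Num.Theory.
Set Implicit Arguments. Unset Strict Implicit. Unset Printing Implicit Defensive.
Local Open Scope classical_set_scope.
Local Open Scope ring_scope.

(* Under the strong central condition every factor
   z |-> exp (- om * (l th z - l thstar z)) has D-mean at most 1.  An estimate
   built from Z_1, ..., Z_(i-1) is independent of Z_i, so integrating Z_i out
   first shows that the online GUe-value at thstar is a nonnegative
   supermartingale started at 1; Markov's inequality for the process stopped at
   tau /\ N, followed by N -> oo, bounds P (G_tau(thstar) >= 1/alpha) by alpha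
   (Ville's inequality).  The offline value at thstar is a product of such
   factors over S_2 with an estimate independent of S_2, so it has mean at most 1
   and Markov's inequality applies directly.  Both conclusions then follow from
   G(Theta0) <= G(thstar) for thstar in Theta0.
   Independence is used through the joint law of Z_k and sigma(Z_j, j in J),
   k \notin J, which is a product measure by uniqueness on the pi-system of
   cylinder rectangles; Tonelli then integrates Z_k out first. *)

Lemma set_seq_cons (T : eqType) (x : T) (s : seq T) : [set` x :: s] = x |` [set` s].
Proof.
apply/seteqP; split => y /=; rewrite inE; first by case/orP => [/eqP|]; [left|right].
by case=> [->|ys]; rewrite ?eqxx ?ys ?orbT.
Qed.

Section generated_sigma_algebras.
Context {dO dZ : measure_display} {Om : measurableType dO} {Zsp : measurableType dZ}.
Variable Z : nat -> Om -> Zsp.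

Definition generators (J : set nat) : set (set Om) :=
  [set A | exists j (B : set Zsp), J j /\ measurable B /\ A = Z j @^-1` B].

Definition cylinders (J : set nat) : set (set Om) :=
  [set A | exists (s : seq nat) (B : nat -> set Zsp), uniq s /\
     (forall j, j \in s -> J j /\ measurable (B j)) /\
     A = \bigcap_(j in [set` s]) (Z j @^-1` B j)].

Lemma cylindersT J : cylinders J setT.
Proof. by exists [::], (fun _ => setT); rewrite set_nil bigcap_set0. Qed.

Lemma cylinders_setI J : setI_closed (cylinders J).
Proof.
move=> _ _ [s1 [B1 [u1 [h1 ->]]]] [s2 [B2 [u2 [h2 ->]]]].
pose B j := (if j \in s1 then B1 j else setT) `&` (if j \in s2 then B2 j else setT).
exists (undup (s1 ++ s2)), B; split; first exact: undup_uniq.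
split.
  move=> j; rewrite mem_undup mem_cat /B.
  case: (boolP (j \in s1)) => js1; case: (boolP (j \in s2)) => js2 //= _.
  - by have [J1 mB1] := h1 j js1; have [_ mB2] := h2 j js2; split=> //; exact: measurableI.
  - by have [J1 mB1] := h1 j js1; rewrite setIT.
  - by have [J2 mB2] := h2 j js2; rewrite setTI.
apply/seteqP; split => w.
  move=> [a1 a2] j /=; rewrite mem_undup mem_cat /B => _.
  by split; case: ifP => // js; [exact: a1|exact: a2].
move=> a; split => j /= js.
  have js12 : j \in undup (s1 ++ s2) by rewrite mem_undup mem_cat js.
  by have [] := a j js12; rewrite js.
have js12 : j \in undup (s1 ++ s2) by rewrite mem_undup mem_cat js orbT.
by have [_] := a j js12; rewrite js.
Qed.

Lemma generators_sub_cylinders J : generators J `<=` cylinders J.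
Proof.
move=> _ [j [B [Jj [mB ->]]]]; exists [:: j], (fun _ => B); split => //; split.
  by move=> i; rewrite inE => /eqP ->.
by rewrite set_cons1 bigcap_set1.
Qed.

Lemma cylinders_sub_gen_sigma J : cylinders J `<=` gen_sigma Z J.
Proof.
move=> _ [s [B [_ [hs ->]]]]; elim: s hs => [|j s IH] hs.
  by rewrite set_nil bigcap_set0; exact: (@measurableT _ (g_sigma_algebraType (generators J))).
rewrite set_seq_cons bigcap_setU1.
apply: (@measurableI _ (g_sigma_algebraType (generators J))).
  have [Jj mB] := hs j (mem_head _ _).
  by apply: sub_sigma_algebra; exists j, (B j).
by apply: IH => i si; apply: hs; rewrite inE si orbT.
Qed.

Lemma sigma_cylinders J : <<s cylinders J >> = gen_sigma Z J.
Proof.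
apply/seteqP; split; apply: smallest_sub; try exact: smallest_sigma_algebra.
  exact: cylinders_sub_gen_sigma.
by move=> A /generators_sub_cylinders; exact: sub_sigma_algebra.
Qed.

Lemma gen_sigma_sub J1 J2 : J1 `<=` J2 -> gen_sigma Z J1 `<=` gen_sigma Z J2.
Proof.
move=> J12; apply: smallest_sub; first exact: smallest_sigma_algebra.
by move=> _ [j [B [J1j [mB ->]]]]; apply: sub_sigma_algebra; exists j, B; split => //; exact: J12.
Qed.

Local Notation OmG J := (g_sigma_algebraType (generators J)).

Lemma measurable_fun_gen_sigmaW d (T : measurableType d) J1 J2 (f : Om -> T) :
  J1 `<=` J2 -> @measurable_fun _ _ (OmG J1) T setT f -> @measurable_fun _ _ (OmG J2) T setT f.
Proof. by move=> J12 mf _ B mB; apply: gen_sigma_sub J12 _ _; exact: mf. Qed.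

Lemma measurable_fun_gen_sigma_Z J j : J j -> @measurable_fun _ _ (OmG J) Zsp setT (Z j).
Proof. by move=> Jj _ B mB; rewrite setTI; apply: sub_sigma_algebra; exists j, B. Qed.

Hypothesis mZ : forall j, measurable_fun setT (Z j).

Lemma gen_sigma_measurable J : gen_sigma Z J `<=` measurable.
Proof.
apply: smallest_sub; first exact: sigma_algebra_measurable.
by move=> _ [j [B [_ [mB ->]]]]; rewrite -(setTI (Z j @^-1` B)); exact: mZ.
Qed.

Lemma measurable_fun_gen_sigma d (T : measurableType d) J (f : Om -> T) :
  @measurable_fun _ _ (OmG J) T setT f -> measurable_fun setT f.
Proof. by move=> mf _ B mB; apply: gen_sigma_measurable; exact: mf. Qed.

End generated_sigma_algebras.

Lemma measurable_prod_g_sigmaE d1 (T1 : measurableType d1) (T2 : pointedType)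
    (G : set (set T2)) : G setT ->
  @measurable _ (T1 * g_sigma_algebraType G)%type =
  <<s [set A `*` B | A in measurable & B in G] >>.
Proof.
move=> GT; rewrite measurable_prod_measurableType.
set M := <<s [set A `*` B | A in _ & B in G] >>.
have MAB A B : measurable A -> G B -> M (A `*` B).
  by move=> mA GB; apply: sub_sigma_algebra; exists A => //; exists B.
apply/seteqP; split; apply: smallest_sub; try exact: smallest_sigma_algebra.
  move=> _ [A mA [B mB <-]].
  suff : <<s G >> `<=` [set B0 | M (A `*` B0)] by apply.
  apply: smallest_sub => [|B0 GB0]; last exact: MAB.
  split => /=.
  - by rewrite setX0; exact: (@measurable0 _ (g_sigma_algebraType _)).
  - move=> B0 MB0; have -> : A `*` (setT `\` B0) = A `*` setT `\` A `*` B0.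
      by apply/seteqP; split => -[x y] /=; tauto.
    by apply: (@measurableD _ (g_sigma_algebraType _)) => //; exact: MAB.
  - move=> B0 MB0; rewrite setX_bigcupr.
    exact: (@bigcupT_measurable _ (g_sigma_algebraType _)).
move=> _ [A mA [B GB <-]]; apply: sub_sigma_algebra.
by exists A => //; exists B => //; exact: sub_sigma_algebra.
Qed.

Lemma measurable_fun_uncurry d0 d1 d2 d3 (T0 : measurableType d0) (T1 : measurableType d1)
    (T2 : measurableType d2) (T3 : measurableType d3)
    (f : T1 -> T2 -> T3) (g : T0 -> T1) (h : T0 -> T2) :
  measurable_fun setT (fun p : T1 * T2 => f p.1 p.2) ->
  measurable_fun setT g -> measurable_fun setT h ->
  measurable_fun setT (fun x => f (g x) (h x)).
Proof.
move=> mf mg mh.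
exact: (measurableT_comp (f := fun p : T1 * T2 => f p.1 p.2) mf (measurable_fun_pair mg mh)).
Qed.

Section independence.
Context {R : realType} {dO dZ : measure_display}
  {Om : measurableType dO} {Zsp : measurableType dZ}.
Variables (P : probability Om R) (Z : nat -> Om -> Zsp) (D : probability Zsp R).
Hypothesis hiid : iid P Z D.

Lemma cylinder_indep J k A B : ~ J k -> cylinders Z J A -> measurable B ->
  P (Z k @^-1` B `&` A) = (D B * P A)%E.
Proof.
move=> Jk [s [Bs [us [hs ->]]]] mB; have [_ [Pprod Plaw]] := hiid.
have ks : k \notin s by apply/negP => /hs [].
pose B' j := if j == k then B else Bs j.
have B'E j : j \in s -> B' j = Bs j.
  by rewrite /B'; case: eqP => // ->; rewrite (negbTE ks).
have mB' j : j \in k :: s -> measurable (B' j).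
  rewrite inE /B' => /orP[/eqP->|js]; first by rewrite eqxx.
  by case: eqP => _ //; have [] := hs j js.
have -> : Z k @^-1` B `&` \bigcap_(j in [set` s]) (Z j @^-1` Bs j) =
    \bigcap_(j in [set` k :: s]) (Z j @^-1` B' j).
  rewrite set_seq_cons bigcap_setU1 /B' eqxx; congr (_ `&` _).
  by apply: eq_bigcapr => j /= js; rewrite -/(B' j) B'E.
rewrite Pprod //=; last by rewrite ks.
rewrite big_cons {1}/B' eqxx Plaw // Pprod //; last by move=> j js; have [] := hs j js.
by congr (_ * _)%E; apply: eq_big_seq => j js; rewrite B'E.
Qed.

Local Notation OmC J := (g_sigma_algebraType (cylinders Z J)).

Lemma measurable_id_cylinders J : measurable_fun setT (id : Om -> OmC J).
Proof.
move=> _ A mA; rewrite setTI; apply: (gen_sigma_measurable (J := J) hiid.1).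
by rewrite -sigma_cylinders.
Qed.

(* The identity of [Om] seen as a map into [Om] equipped with sigma(Z_j, j in J):
   [distribution P (coarsen J)] is the restriction of [P] to that sigma-algebra. *)
Definition coarsen J : {mfun Om >-> OmC J} :=
  HB.pack (id : Om -> OmC J) (isMeasurableFun.Build _ _ _ _ _ (@measurable_id_cylinders J)).

Lemma measurable_coarsen_pair k J :
  measurable_fun setT (fun w : Om => (Z k w, coarsen J w)).
Proof. by apply: measurable_fun_pair; [exact: hiid.1|exact: measurable_funP]. Qed.

Definition coarsen_pair k J : {mfun Om >-> (Zsp * OmC J)%type} :=
  HB.pack (fun w : Om => (Z k w, coarsen J w))
    (isMeasurableFun.Build _ _ _ _ _ (@measurable_coarsen_pair k J)).

Lemma distribution_coarsen_pair J k : ~ J k -> forall X, measurable X ->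
  distribution P (coarsen_pair k J) X = (D \x distribution P (coarsen J))%E X.
Proof.
move=> Jk X mX.
pose G : set (set (Zsp * OmC J)) := [set A `*` B | A in @measurable _ Zsp & B in cylinders Z J].
apply: (measure_unique G (fun _ => setT)) => //.
- by apply: measurable_prod_g_sigmaE; exact: cylindersT.
- move=> _ _ [A1 mA1 [B1 cB1 <-]] [A2 mA2 [B2 cB2 <-]]; rewrite -setXI.
  by exists (A1 `&` A2); [exact: measurableI|exists (B1 `&` B2) => //; exact: cylinders_setI].
- by move=> _; exists setT => //; exists setT => //; [exact: cylindersT|rewrite setXTT].
- by rewrite bigcup_const.
- move=> _ [A mA [B cB <-]].
  transitivity (D A * distribution P (coarsen J) B)%E.
    by rewrite /= /pushforward /= -(cylinder_indep Jk cB mA).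
  by apply/esym/product_measure1E => //; exact: sub_sigma_algebra.
- by move=> _; exact: (le_lt_trans (probability_le1 _ measurableT) (ltry 1)).
Qed.

Local Notation OmG J := (g_sigma_algebraType (generators Z J)).

Lemma integral_mul_indep_le dT (Th : measurableType dT) (f : Th -> Zsp -> R)
    J k (H : Om -> R) (th : Om -> Th) :
  measurable_fun setT (fun p : Th * Zsp => f p.1 p.2) ->
  (forall t z, 0 <= f t z) -> (forall t, (\int[D]_z (f t z)%:E <= 1)%E) ->
  ~ J k -> (forall w, 0 <= H w) ->
  @measurable_fun _ _ (OmG J) R setT H -> @measurable_fun _ _ (OmG J) Th setT th ->
  (\int[P]_w (H w * f (th w) (Z k w))%:E <= \int[P]_w (H w)%:E)%E.
Proof.
move=> mf f0 f1 Jk H0 mH mth.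
have toC d (T : measurableType d) (g : Om -> T) :
    @measurable_fun _ _ (OmG J) T setT g -> @measurable_fun _ _ (OmC J) T setT g.
  by move=> mg _ B mB; rewrite /measurable /= sigma_cylinders; exact: mg.
pose F (p : (Zsp * OmC J)%type) : \bar R := (H p.2 * f (th p.2) p.1)%:E.
have F0 p : (0 <= F p)%E by rewrite lee_fin mulr_ge0.
have mF : measurable_fun setT F.
  apply/measurable_EFinP/measurable_funM; first exact: measurableT_comp (toC _ _ _ mH) _.
  exact: measurable_fun_uncurry mf (measurableT_comp (toC _ _ _ mth) measurable_snd) measurable_fst.
have mHC : measurable_fun setT (fun w : OmC J => (H w)%:E).
  by apply/measurable_EFinP; exact: toC _ _ _ mH.
(* Tonelli for the product law of [(Z k, coarsen J)], integrating [Z k] first. *)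
rewrite -[X in (X <= _)%E](ge0_integral_distribution (coarsen_pair k J) mF F0).
rewrite -(ge0_integral_distribution (coarsen J) mHC) => [|w]; last by rewrite lee_fin.
rewrite (eq_measure_integral (D \x distribution P (coarsen J))%E); last first.
  by move=> A mA _; exact: distribution_coarsen_pair.
rewrite (fubini_tonelli2 F mF F0).
apply: ge0_le_integral => //.
- by move=> w _; apply: integral_ge0 => z _; exact: F0.
- exact: measurable_fun_fubini_tonelli_G.
move=> w _; rewrite /fubini_G /F /=.
under eq_integral do rewrite EFinM.
rewrite ge0_integralZl_EFin //.
- by rewrite -[leRHS]mule1 lee_wpmul2l // lee_fin.
- by move=> z _; rewrite lee_fin.
- apply/measurable_EFinP.
  rewrite (_ : f (th w) = (fun p : (Th * Zsp)%type => f p.1 p.2) \o pair (th w)) //.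
  by apply: measurableT_comp; [exact: mf|exact: measurable_fun_pair].
Qed.

Lemma integral_prod_indep_le1 dT (Th : measurableType dT) (f : Th -> Zsp -> R)
    J (th : Om -> Th) (s : seq nat) :
  measurable_fun setT (fun p : Th * Zsp => f p.1 p.2) ->
  (forall t z, 0 <= f t z) -> (forall t, (\int[D]_z (f t z)%:E <= 1)%E) ->
  @measurable_fun _ _ (OmG J) Th setT th ->
  uniq s -> (forall i, i \in s -> ~ J i) ->
  (\int[P]_w (\prod_(i <- s) f (th w) (Z i w))%:E <= 1)%E.
Proof.
move=> mf f0 f1 mth; elim: s => [|i s IH] us sJ.
  under eq_integral do rewrite big_nil.
  by rewrite integral_cst // mul1e probability_le1.
case/andP: us => si us.
have sJ' j : j \in s -> ~ J j by move=> js; apply: sJ; rewrite inE js orbT.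
have Js : J `<=` J `|` [set` s] by move=> j Jj; left.
have mprod : @measurable_fun _ _ (OmG (J `|` [set` s])) R setT
    (fun w => \prod_(j <- s) f (th w) (Z j w)).
  apply: measurable_prod => j js.
  apply: measurable_fun_uncurry mf (measurable_fun_gen_sigmaW Js mth) _.
  exact: measurable_fun_gen_sigma_Z (or_intror js).
under eq_integral do rewrite big_cons mulrC.
apply: le_trans (IH us sJ'); apply: (integral_mul_indep_le (J := J `|` [set` s])) => //.
- by case=> [|/=]; [exact: sJ i (mem_head _ _)|apply/negP].
- by move=> w; apply: prodr_ge0.
- exact: measurable_fun_gen_sigmaW Js mth.
Qed.

End independence.

Section measure_tools.
Context {R : realType} {d : measure_display} {Om : measurableType d}.

Lemma measurable_superlevel (g : Om -> R) c :
  measurable_fun setT g -> measurable [set w | c <= g w].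
Proof.
move=> mg; have := mg measurableT _ (measurable_itv `[c, +oo[).
by rewrite setTI; congr measurable; apply/seteqP; split => w /=; rewrite in_itv /= andbT.
Qed.

Lemma measurable_fun_piecewise (s : Om -> nat) (g : nat -> Om -> R) :
  (forall k, measurable (s @^-1` [set k])) -> (forall k, measurable_fun setT (g k)) ->
  measurable_fun setT (fun w => g (s w) w).
Proof.
move=> ms mg _ B mB; rewrite setTI.
have -> : (fun w => g (s w) w) @^-1` B = \bigcup_k (s @^-1` [set k] `&` g k @^-1` B).
  by apply/seteqP; split => [w|w [k _ [/= -> //]]]; exists (s w).
apply: bigcupT_measurable => k; apply: measurableI => //.
by rewrite -(setTI (g k @^-1` B)); exact: mg.
Qed.

Lemma prob_le_inv_of_integral_le1 (P : probability Om R) (A : set Om) (g : Om -> R) c :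
  0 < c -> measurable A -> measurable_fun setT g -> (forall w, 0 <= g w) ->
  (forall w, A w -> c <= g w) -> (\int[P]_w (g w)%:E <= 1)%E -> (P A <= c^-1%:E)%E.
Proof.
move=> c0 mA mg g0 gA g1.
rewrite -[leRHS]mule1 lee_pdivlMl // -integral_cst //.
apply: le_trans g1; apply: (@le_trans _ _ (\int[P]_(w in A) (g w)%:E)%E).
  apply: ge0_le_integral => //.
  - by move=> w _; rewrite lee_fin ltW.
  - exact/measurable_EFinP/measurable_funTS.
by apply: ge0_subset_integral => //; [exact/measurable_EFinP|move=> w _; rewrite lee_fin].
Qed.

End measure_tools.

Section stopped_supermartingale.
Context {R : realType} {d : measure_display} {Om : measurableType d}.
Variables (P : probability Om R) (F : nat -> set (set Om)) (M : nat -> Om -> R).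
Hypothesis F_sigma : forall n, sigma_algebra setT (F n).
Hypothesis F_mono : forall n m, (n <= m)%N -> F n `<=` F m.
Hypothesis F_meas : forall n, F n `<=` measurable.
Hypothesis M_ge0 : forall n w, 0 <= M n w.
Hypothesis M_meas : forall n, measurable_fun setT (M n).
Hypothesis M0_le1 : (\int[P]_w (M 0 w)%:E <= 1)%E.
Hypothesis M_super : forall n A, F n A ->
  (\int[P]_(w in A) (M n.+1 w)%:E <= \int[P]_(w in A) (M n w)%:E)%E.
Variable tau : Om -> nat.
Hypothesis tau_stop : forall k, F k (tau @^-1` [set k]).

Lemma stopping_time_gt N : F N [set w | (N < tau w)%N].
Proof.
have [F0 FC FU] := F_sigma N.
have -> : [set w | (N < tau w)%N] =
    setT `\` \bigcup_k (if (k <= N)%N then tau @^-1` [set k] else set0).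
  apply/seteqP; split => w /=.
    by move=> Nw; split => // -[k _]; case: ifP => // kN /= wk; move: Nw; rewrite wk ltnNge kN.
  move=> [_ Nw]; rewrite ltnNge; apply/negP => wN; apply: Nw.
  by exists (tau w) => //; rewrite wN.
apply: FC; apply: FU => k; case: ifP => // kN; exact: F_mono kN _ (tau_stop k).
Qed.

Lemma measurable_stopping_level k : measurable (tau @^-1` [set k]).
Proof. exact: F_meas (tau_stop k). Qed.

Lemma measurable_fun_stopped : measurable_fun setT (fun w => M (tau w) w).
Proof. exact: measurable_fun_piecewise measurable_stopping_level M_meas. Qed.

Let Mstop N w := M (minn (tau w) N) w.

Lemma measurable_fun_stopped_min N : measurable_fun setT (Mstop N).
Proof.
exact: (measurable_fun_piecewise (g := fun k => M (minn k N)) measurable_stopping_level).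
Qed.

(* [Mstop N.+1] and [Mstop N] agree on [tau <= N], and on [N < tau], an event of
   [F N], they are [M N.+1] and [M N]. *)
Lemma integral_stopped_min_le1 N : (\int[P]_w (Mstop N w)%:E <= 1)%E.
Proof.
elim: N => [|N IH].
  by under eq_integral do rewrite /Mstop minn0.
pose T := [set w | (N < tau w)%N].
have mT : measurable T by exact: F_meas (stopping_time_gt N).
have splitT (g : Om -> R) : measurable_fun setT g -> (forall w, 0 <= g w) ->
    (\int[P]_w (g w)%:E = \int[P]_(w in ~` T) (g w)%:E + \int[P]_(w in T) (g w)%:E)%E.
  move=> mg g0; rewrite -ge0_integral_setU ?setvU //.
  - exact: measurableC.
  - exact/measurable_EFinP.
  - by move=> w _; rewrite lee_fin.
  - exact/disj_setPCr.
apply: le_trans IH.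
rewrite !(splitT _ (measurable_fun_stopped_min _) (fun w => M_ge0 _ w)).
have eqC : {in ~` T, Mstop N.+1 =1 Mstop N}.
  move=> w /[!inE] /negP; rewrite -leqNgt => wN.
  by rewrite /Mstop (minn_idPl wN) (minn_idPl (leqW wN)).
have eqT n : (n <= N.+1)%N -> {in T, Mstop n =1 M n}.
  by move=> nN w /[!inE] Nw; rewrite /Mstop (minn_idPr (leq_trans nN Nw)).
rewrite [X in (X + _ <= _)%E](eq_integral (fun w => (Mstop N w)%:E)); last first.
  by move=> w wT; rewrite eqC.
rewrite [X in (_ + X <= _)%E](eq_integral (fun w => (M N.+1 w)%:E)); last first.
  by move=> w wT; rewrite (eqT _ (leqnn _)).
rewrite [X in (_ <= _ + X)%E](eq_integral (fun w => (M N w)%:E)); last first.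
  by move=> w wT; rewrite (eqT _ (leqnSn _)).
exact/leeD2l/M_super/stopping_time_gt.
Qed.

(* Markov's inequality for [Mstop N] on [tau <= N], then continuity from below. *)
Lemma stopped_prob_le_inv (c : R) : 0 < c ->
  (P [set w | (c <= M (tau w) w)%R] <= c^-1%:E)%E.
Proof.
move=> c0.
have mA : measurable [set w | c <= M (tau w) w].
  exact/measurable_superlevel/measurable_fun_stopped.
pose A N := [set w | c <= M (tau w) w] `&` [set w | (tau w <= N)%N].
have mAN N : measurable (A N).
  apply: measurableI => //; rewrite (_ : [set w | _] = ~` [set w | (N < tau w)%N]).
    by apply: measurableC; exact: F_meas (stopping_time_gt N).
  apply/seteqP; split => w /=; rewrite ltnNge; first by move=> ->.
  by move/negP/negbNE.
have AN_le N : (P (A N) <= c^-1%:E)%E.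
  apply: (prob_le_inv_of_integral_le1 c0 (mAN N) (measurable_fun_stopped_min N)).
  - by move=> w; exact: M_ge0.
  - by move=> w [cw /= wN]; rewrite /Mstop (minn_idPl wN).
  - exact: integral_stopped_min_le1.
have AE : [set w | c <= M (tau w) w] = \bigcup_N A N.
  by apply/seteqP; split => [w cw|w [n _ []] //]; exists (tau w) => //; split => /=.
have A_nd : nondecreasing_seq A.
  by move=> n m nm; apply/subsetPset => w [cw /= wn]; split => //=; exact: leq_trans wn nm.
have mU : measurable (\bigcup_N A N) by rewrite -AE.
have cvgA := nondecreasing_cvg_mu (mu := P) mAN mU A_nd.
rewrite AE -(cvg_lim _ cvgA) //; apply: lime_le; first by apply/cvg_ex; eexists; exact: cvgA.
exact: nearW.
Qed.

End stopped_supermartingale.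

Definition central_factor {R : realType} {Th Zsp : Type}
  (l : Th -> Zsp -> R) (thstar : Th) (om : R) (th : Th) (z : Zsp) : R :=
  expR (- om * (l th z - l thstar z)).

Section central_factor.
Context {R : realType} {dT dZ : measure_display}
  {Th : measurableType dT} {Zsp : measurableType dZ}.
Variables (l : Th -> Zsp -> R) (thstar : Th) (om : R).

Lemma central_factor_ge0 th z : 0 <= central_factor l thstar om th z.
Proof. exact: expR_ge0. Qed.

Lemma measurable_central_factor :
  measurable_fun setT (fun p : Th * Zsp => l p.1 p.2) ->
  measurable_fun setT (fun p : Th * Zsp => central_factor l thstar om p.1 p.2).
Proof.
move=> mlp; apply: measurableT_comp => //; apply: measurable_funM => //.
apply: measurable_funB => //.
exact: measurable_fun_uncurry mlp (measurable_cst _) measurable_snd.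
Qed.

End central_factor.

Section GUe_values.
Context {R : realType} {Th Zsp Om : Type}.
Variables (l : Th -> Zsp -> R) (est : seq Zsp -> Th) (om : R) (Z : nat -> Om -> Zsp).

Lemma G_on0 theta0 th w : G_on l est theta0 om Z 0 th w = 1.
Proof. by rewrite /G_on big_ord0 mulr0 expR0. Qed.

Lemma G_onS theta0 n th w : G_on l est theta0 om Z n.+1 th w =
  G_on l est theta0 om Z n th w * central_factor l th om (est_on est theta0 Z n w) (Z n w).
Proof. by rewrite /G_on big_ord_recr /= mulrDr expRD. Qed.

Lemma G_off_prod n (I1 : {set 'I_n}) th w : G_off l est om Z I1 th w =
  \prod_(i <- [seq val i | i <- enum (~: I1)])
    central_factor l th om (est (subsample Z I1 w)) (Z i w).
Proof.
(* For an empty S_2 the empirical risk is [0^-1 * 0] and both sides are [1]. *)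
rewrite /G_off /emp_risk /subsample !size_map -cardE big_map !big_map.
have [I1C0|I1C_gt0] := posnP #|~: I1|.
  have -> : enum (~: I1) = [::] by apply/eqP; rewrite -size_eq0 -cardE I1C0.
  by rewrite !big_nil I1C0 mulr0 mul0r expR0.
rewrite -mulrBr mulrA mulfK ?pnatr_eq0 -?lt0n // -sumrB mulr_sumr expR_sum.
by apply: eq_bigr => i _; rewrite /central_factor.
Qed.

End GUe_values.

Section validity.
Context {R : realType} {dO dZ dT : measure_display}
  {Om : measurableType dO} {Zsp : measurableType dZ} {Th : measurableType dT}.
Variables (P : probability Om R) (Z : nat -> Om -> Zsp) (D : probability Zsp R).
Variables (l : Th -> Zsp -> R) (thstar : Th) (om : R).
Hypothesis hlm : measurable_fun setT (fun p : Th * Zsp => l p.1 p.2).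
Hypothesis hiid : iid P Z D.
Hypothesis hcen : forall th, (\int[D]_z (central_factor l thstar om th z)%:E <= 1)%E.

Section online.
Variables (est : seq Zsp -> Th) (theta0 : Th).
Hypothesis hest : forall k : nat, (0 < k)%N -> forall B : set Th, measurable B ->
  gen_sigma Z [set j | (j < k)%N] ((fun w => est (sample Z k w)) @^-1` B).

Local Notation filtration := (fun n => gen_sigma Z [set j | (j < n)%N]).
Local Notation Fn n := (g_sigma_algebraType (generators Z [set j | (j < n)%N])).
Local Notation G n := (fun w => G_on l est theta0 om Z n thstar w).

Lemma measurable_est_on n : @measurable_fun _ _ (Fn n) Th setT (est_on est theta0 Z n).
Proof.
case: n => [|n]; first exact: measurable_cst.
by move=> _ B mB; rewrite setTI; exact: hest.
Qed.

Lemma measurable_G_on n : @measurable_fun _ _ (Fn n) R setT (G n).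
Proof.
have Fn_sub m : [set j | (j < m)%N] `<=` [set j | (j < m.+1)%N] by move=> j /ltnW.
elim: n => [|n IH].
  by rewrite (_ : G 0 = cst 1); [exact: measurable_cst|apply/funext => w; rewrite G_on0].
rewrite (_ : G n.+1 = fun w => G n w *
    central_factor l thstar om (est_on est theta0 Z n w) (Z n w)); last first.
  by apply/funext => w; rewrite G_onS.
apply: measurable_funM; first exact: measurable_fun_gen_sigmaW (Fn_sub n) IH.
have mcf := measurable_central_factor thstar om hlm.
have mest := measurable_fun_gen_sigmaW (Fn_sub n) (measurable_est_on (n := n)).
have mZn := measurable_fun_gen_sigma_Z (Z := Z) (J := [set j | (j < n.+1)%N]) (ltnSn n).
exact: measurableT_comp mcf (measurable_fun_pair mest mZn).
Qed.

Lemma G_on_supermartingale n A : filtration n A ->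
  (\int[P]_(w in A) (G n.+1 w)%:E <= \int[P]_(w in A) (G n w)%:E)%E.
Proof.
move=> FA; rewrite (integral_mkcond A) (integral_mkcond A).
pose H w := G n w * \1_A w.
have HE : (fun w => (G n w)%:E) \_ A = fun w => (H w)%:E.
  by apply/funext => w; rewrite patchE /H indicE; case: (w \in A); rewrite ?mulr1 ?mulr0.
have HSE : (fun w => (G n.+1 w)%:E) \_ A =
    fun w => (H w * central_factor l thstar om (est_on est theta0 Z n w) (Z n w))%:E.
  apply/funext => w; rewrite patchE /H indicE G_onS.
  by case: (w \in A); rewrite ?mulr1 ?mulr0 ?mul0r.
rewrite HE HSE; apply: (integral_mul_indep_le hiid (J := [set j | (j < n)%N])).
- exact: measurable_central_factor.
- exact: central_factor_ge0.
- exact: hcen.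
- by rewrite /= ltnn.
- by move=> w; rewrite /H mulr_ge0 ?expR_ge0 // indicE ler0n.
- apply: measurable_funM; first exact: measurable_G_on.
  exact: (@measurable_indic _ (Fn n)).
- exact: measurable_est_on.
Qed.

Variable tau : Om -> nat.
Hypothesis htau : stopping_time Z tau.

Lemma measurable_G_on_stopped : measurable_fun setT (fun w => G (tau w) w).
Proof.
apply: (measurable_fun_stopped (F := filtration) (M := fun n => G n)) => //.
- by move=> n; apply: gen_sigma_measurable; case: hiid.
- by move=> n; apply: measurable_fun_gen_sigma (@measurable_G_on n); case: hiid.
Qed.

Lemma G_on_stopped_prob_le (c : R) : 0 < c ->
  (P [set w | (c <= G (tau w) w)%R] <= c^-1%:E)%E.
Proof.
apply: (stopped_prob_le_inv (F := filtration) (M := fun n => G n)) => //.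
- by move=> n; exact: smallest_sigma_algebra.
- by move=> n m nm; apply: gen_sigma_sub => j /= /leq_trans; apply.
- by move=> n; apply: gen_sigma_measurable; case: hiid.
- by move=> n w; exact: expR_ge0.
- by move=> n; apply: measurable_fun_gen_sigma (@measurable_G_on n); case: hiid.
- under eq_integral do rewrite G_on0.
  by rewrite integral_cst // mul1e probability_le1.
- exact: G_on_supermartingale.
Qed.

End online.

Section offline.
Variables (est : seq Zsp -> Th) (n : nat) (I1 : {set 'I_n}).

Local Notation J1 := [set j | exists i : 'I_n, i \in I1 /\ j = nat_of_ord i].
Local Notation S2 := [seq val i | i <- enum (~: I1)].

Hypothesis hest : forall B : set Th, measurable B ->
  gen_sigma Z J1 ((fun w => est (subsample Z I1 w)) @^-1` B).

Lemma measurable_est_S1 :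
  @measurable_fun _ _ (g_sigma_algebraType (generators Z J1)) Th setT
    (fun w => est (subsample Z I1 w)).
Proof. by move=> _ B mB; rewrite setTI; exact: hest. Qed.

Lemma measurable_G_off : measurable_fun setT (G_off l est om Z I1 thstar).
Proof.
have [mZ _] := hiid.
rewrite (_ : G_off _ _ _ _ _ _ = fun w => \prod_(i <- S2)
    central_factor l thstar om (est (subsample Z I1 w)) (Z i w)); last first.
  by apply/funext => w; rewrite G_off_prod.
apply: measurable_prod => i _.
exact: measurableT_comp (measurable_central_factor thstar om hlm)
  (measurable_fun_pair (measurable_fun_gen_sigma mZ measurable_est_S1) (mZ i)).
Qed.

Lemma G_off_prob_le (c : R) : 0 < c ->
  (P [set w | (c <= G_off l est om Z I1 thstar w)%R] <= c^-1%:E)%E.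
Proof.
move=> c0; apply: (prob_le_inv_of_integral_le1 (g := G_off l est om Z I1 thstar)) => //.
- exact/measurable_superlevel/measurable_G_off.
- exact: measurable_G_off.
- by move=> w; exact: expR_ge0.
under eq_integral do rewrite G_off_prod.
apply: (integral_prod_indep_le1 hiid (J := J1)).
- exact: measurable_central_factor.
- exact: central_factor_ge0.
- exact: hcen.
- exact: measurable_est_S1.
- by rewrite map_inj_uniq ?enum_uniq //; exact: val_inj.
- move=> _ /mapP [i iI1 ->] [i' [i'I1 /val_inj ii']].
  by move: iI1; rewrite mem_enum inE ii' i'I1.
Qed.

End offline.

End validity.

Lemma evalue_test_level_coverage {R : realType} {d : measure_display}
    {Om : measurableType d} {Th : Type} (P : probability Om R)
    (g : Th -> Om -> R) (thstar : Th) (alpha : R) : 0 < alpha ->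
  (forall th w, 0 <= g th w) -> measurable_fun setT (g thstar) ->
  (forall c : R, 0 < c -> (P [set w | (c <= g thstar w)%R] <= c^-1%:E)%E) ->
  (forall Th0 : set Th, Th0 thstar ->
     outer_prob_le P [set w | alpha^-1 <= G_set (fun th => g th w) Th0] alpha) /\
  ((1 - alpha)%:E <= P [set w | [set th | (g th w < alpha^-1)%R] thstar])%E.
Proof.
move=> alpha_gt0 g0 mg tail.
have mE := measurable_superlevel (alpha^-1) mg.
have ainv_gt0 : 0 < alpha^-1 by rewrite invr_gt0.
have PE := tail _ ainv_gt0; rewrite invrK in PE.
split=> [Th0 Th0star|].
  exists [set w | alpha^-1 <= g thstar w]; split => //; split => // w /= hw.
  apply: le_trans hw _; apply: ge_inf; last by exists thstar.
  by exists 0 => _ [th _ <-].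
rewrite (_ : [set w | _] = ~` [set w | alpha^-1 <= g thstar w]).
  by rewrite probability_setC // EFinB leeB.
by apply/seteqP; split => w /=; rewrite ltNge => /negP.
Qed.

Lemma stopping_time_cst dO dZ (Om : measurableType dO) (Zsp : measurableType dZ)
  (Z : nat -> Om -> Zsp) (n : nat) : stopping_time Z (fun=> n).
Proof.
move=> k; rewrite preimage_cst.
pose Fk := g_sigma_algebraType (generators Z [set j | (j < k)%N]).
by case: ifP => _; [exact: (@measurableT _ Fk)|exact: (@measurable0 _ Fk)].
Qed.

Unset Implicit Arguments.
Theorem theorem1
  (R : realType) (dO dZ dT : measure_display)
  (Om : measurableType dO) (Zsp : measurableType dZ) (Th : measurableType dT)
  (P : probability Om R) (Z : nat -> Om -> Zsp) (D : probability Zsp R)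
  (l : Th -> Zsp -> R)
  (hl0 : forall th z, 0 <= l th z)
  (hlm : measurable_fun setT (fun p : Th * Zsp => l p.1 p.2))
  (hiid : iid P Z D)
  (thstar : Th)
  (hmin : forall th : Th,
     (\int[D]_z (l thstar z)%:E <= \int[D]_z (l th z)%:E)%E)
  (ombar : R) (hombar : 0 < ombar)
  (hcentral : forall (th : Th) (o : R), 0 <= o < ombar ->
     (\int[D]_z (expR (- o * (l th z - l thstar z)))%:E <= 1)%E)
  (om : R) (hom : 0 <= om < ombar)
  (alpha : R) (halpha : 0 < alpha < 1) :
  (* online GUe-value *)
  (forall (est : seq Zsp -> Th) (theta0 : Th),
     is_AERM l est ->
     (forall k : nat, (0 < k)%N -> forall B : set Th, measurable B ->
        gen_sigma Z [set j | (j < k)%N]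
          ((fun w => est (sample Z k w)) @^-1` B)) ->
     (forall n : nat,
        (forall Th0 : set Th, Th0 thstar ->
           outer_prob_le P
             [set w | alpha^-1 <= G_set (fun th => G_on l est theta0 om Z n th w) Th0]
             alpha) /\
        ((1 - alpha)%:E <=
           P [set w | [set th | (G_on l est theta0 om Z n th w < alpha^-1)%R] thstar])%E) /\
     (forall tau : Om -> nat, stopping_time Z tau ->
        (forall Th0 : set Th, Th0 thstar ->
           outer_prob_le P
             [set w | alpha^-1 <= G_set (fun th => G_on l est theta0 om Z (tau w) th w) Th0]
             alpha) /\
        ((1 - alpha)%:E <=
           P [set w | [set th | (G_on l est theta0 om Z (tau w) th w < alpha^-1)%R] thstar])%E))
  /\
  (* offline GUe-value *)
  (forall (est : seq Zsp -> Th) (n : nat) (I1 : {set 'I_n}),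
     is_AERM l est ->
     (0 < #|I1|)%N ->
     (forall B : set Th, measurable B ->
        gen_sigma Z [set j | exists i : 'I_n, i \in I1 /\ j = nat_of_ord i]
          ((fun w => est (subsample Z I1 w)) @^-1` B)) ->
     (forall Th0 : set Th, Th0 thstar ->
        outer_prob_le P
          [set w | alpha^-1 <= G_set (fun th => G_off l est om Z I1 th w) Th0]
          alpha) /\
     ((1 - alpha)%:E <=
        P [set w | [set th | (G_off l est om Z I1 th w < alpha^-1)%R] thstar])%E).
Proof.
have [alpha_gt0 _] := andP halpha.
have hcen th : (\int[D]_z (central_factor l thstar om th z)%:E <= 1)%E := hcentral th om hom.
split=> [est theta0 _ hest|est n I1 _ _ hest].
  have stopped tau (htau : stopping_time Z tau) :=
    evalue_test_level_coverage (g := fun th w => G_on l est theta0 om Z (tau w) th w)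
      alpha_gt0 (fun th w => expR_ge0 _)
      (measurable_G_on_stopped thstar om hlm hiid theta0 hest htau)
      (G_on_stopped_prob_le hlm hiid hcen theta0 hest htau).
  by split=> [m|]; [exact: stopped (@stopping_time_cst _ _ _ _ Z m)|exact: stopped].
exact: (evalue_test_level_coverage (g := G_off l est om Z I1) alpha_gt0
  (fun th w => expR_ge0 _) (measurable_G_off thstar om hlm hiid hest)
  (G_off_prob_le hlm hiid hcen hest)).
Qed.
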